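(* Let $\{M_p\mid p\in P\}$ be a Morse decomposition of a multivector field on a finite simplicial complex $K$, let $f:K\to\mathbb R$ be Lyapunov for the Morse decomposition, and let $P_f$ and $P'_f$ be two $f$-compatible orders of $P$, with corresponding persistence modules $H(\mathbf F,P_f)$ and $H(\mathbf F',P'_f)$. Then $\mathrm{pers}(H(\mathbf F,P_f))=\mathrm{pers}(H(\mathbf F',P'_f))$.
   Context: $K$ is a finite simplicial complex; a multivector field $\mathcal V$ on $K$ is a partition of $K$ into convex sets $V$ (if $\sigma,\tau\in V$ and $\sigma\le\mu\le\tau$ in the face order then $\mu\in V$); $F_{\mathcal V}(\sigma)=[\sigma]_{\mathcal V}\cup\{\tau:\tau\le\sigma\}$ where $[\sigma]_{\mathcal V}$ is the part containing $\sigma$; a path is a sequence $\sigma_1,\dots,\sigma_r$ with $\sigma_k\in F_{\mathcal V}(\sigma_{k-1})$. A Morse decomposition indexed by a finite poset $(P,\le_P)$ is a partition $K=\bigsqcup_{p\in P}M_p$ such that every path from $M_p$ to $M_q$ has $q\le_P p$. Let $m=|P|$. $f:K\to\mathbb R$ is Lyapunov if $f$ is constant on each $M_p$, with value $f(p)$, and $p\le_P q\Rightarrow f(p)\le f(q)$. An $f$-compatible order $P_f$ is an enumeration $p_1,\dots,p_m$ of $P$ that is a linear extension of $\le_P$ with $f(p_1)\le\dots\le f(p_m)$. For such an order, $K_i=\bigsqcup_{j\le i}M_{p_j}$ is a subcomplex of $K$ and $H(\mathbf F,P_f)$ is the persistence module $H_*(C(K_1))\to\dots\to H_*(C(K_m))$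 of simplicial homology over $\mathbb Z_2$ with inclusion-induced maps; $\mathbf F'$ is the same construction for $P'_f$. For such a module indexed by $p_1,\dots,p_m$, $\mathrm{pers}$ is the persistence diagram: decompose each homological degree into interval modules $[a,b]$, $1\le a\le b\le m$, and record for each the point $(f(p_a),f(p_{b+1}))$ with $f(p_{m+1}):=+\infty$, discarding points with $f(p_a)=f(p_{b+1})$; the result is a multiset of points per degree. *)

From HB Require Import structures.
From mathcomp Require Import all_boot all_order all_algebra.
From mathcomp Require Import reals.
Set Implicit Arguments. Unset Strict Implicit. Unset Printing Implicit Defensive.
Import Order.TTheory GRing.Theory Num.Theory.

Local Open Scope ring_scope.

Section Complexes.
Variable V : finType.

Definition simplicial_complex (K : {set {set V}}) : Prop :=
  set0 \notin K /\
  forall s t : {set V}, s \in K -> t \subset s -> t != set0 -> t \in K.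

Definition multivector_field (K : {set {set V}}) (MV : {set {set {set V}}}) : Prop :=
  partition MV K /\
  forall B, B \in MV -> forall s t m : {set V},
    s \in B -> t \in B -> m \in K -> s \subset m -> m \subset t -> m \in B.

Definition Fv (K : {set {set V}}) (MV : {set {set {set V}}}) (s : {set V})
  : {set {set V}} :=
  pblock MV s :|: [set t in K | t \subset s].

Definition mv_path (K : {set {set V}}) (MV : {set {set {set V}}})
  (s : seq {set V}) : Prop :=
  s <> [::] /\ all (fun x => x \in K) s /\
  path (fun a b => b \in Fv K MV a) (head set0 s) (behead s).

Definition morse_decomposition (K : {set {set V}}) (MV : {set {set {set V}}})
  (d : Order.disp_t) (P : finPOrderType d) (M : P -> {set {set V}}) : Prop :=
  (\bigcup_(p : P) M p = K) /\
  (forall p q : P, p != q -> [disjoint M p & M q]) /\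
  (forall (p q : P) (s : seq {set V}), mv_path K MV s ->
     head set0 s \in M p -> last set0 s \in M q -> (q <= p)%O).

Definition lyapunov (R : realType) (d : Order.disp_t) (P : finPOrderType d)
  (M : P -> {set {set V}}) (f : {set V} -> R) (fP : P -> R) : Prop :=
  (forall p s, s \in M p -> f s = fP p) /\
  (forall p q : P, (p <= q)%O -> fP p <= fP q).

(* f-compatible order: enumeration ord 0, ..., ord (m-1) of P (0-based:
   ord i is p_{i+1} of the paper) which is a linear extension of <=_P and
   along which fP is nondecreasing. *)
Definition f_compatible (R : realType) (d : Order.disp_t) (P : finPOrderType d)
  (fP : P -> R) (ord : 'I_#|P| -> P) : Prop :=
  bijective ord /\
  (forall i j : 'I_#|P|, (ord i <= ord j)%O -> (i <= j)%N) /\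
  (forall i j : 'I_#|P|, (i <= j)%N -> fP (ord i) <= fP (ord j)).

(* K_{i+1} = union of M_{ord j}, j <= i  (0-based index i) *)
Definition Kfilt (d : Order.disp_t) (P : finPOrderType d)
  (M : P -> {set {set V}}) (ord : 'I_#|P| -> P) (i : nat) : {set {set V}} :=
  \bigcup_(j : 'I_#|P| | (j <= i)%N) M (ord j).

Definition chain := {ffun {set V} -> 'F_2}.

Definition is_nchain (n : nat) (L : {set {set V}}) (c : chain) : Prop :=
  forall s, c s != 0 -> s \in L /\ #|s| = n.+1.

(* boundary operator over Z_2 (zero in degree 0) *)
Definition bd (c : chain) : chain :=
  [ffun t : {set V} => if t == set0 then 0
     else \sum_(s : {set V} | (t \subset s) && (#|s| == #|t|.+1)) c s].

Definition is_cycle (n : nat) (L : {set {set V}}) (c : chain) : Prop :=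
  is_nchain n L c /\ bd c = 0.

Definition is_boundary (n : nat) (L : {set {set V}}) (c : chain) : Prop :=
  exists c', is_nchain n.+1 L c' /\ bd c' = c.

End Complexes.

(* Bars are pairs (a, b) of 0-based indices with a <= b < m, i.e. the interval
   [a+1, b+1] of the paper.  Bar k is alive at (0-based) index i iff a <= i <= b. *)
Definition alive (bars : seq (nat * nat)) (k i : nat) : bool :=
  ((nth (0, 0) bars k).1 <= i <= (nth (0, 0) bars k).2)%N.

(* An interval decomposition of the degree-n persistence module
   H_n(K_1) -> ... -> H_n(K_m) (Z_2 coefficients, inclusion-induced maps),
   given explicitly as an isomorphism from the direct sum of the interval
   modules of the bars: z k i is a cycle representing the image in H_n(K_{i+1})
   of the generator of the k-th interval summand at index i.  The conditions say:
   - the representatives are cycles of K_{i+1};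
   - the structure map sends the class of z k i to the class of z k (i+1) while
     the bar is alive, and to 0 when the bar dies;
   - for each i, the classes of the z k i (k alive at i) form a basis of
     H_n(K_{i+1}) (linearly independent modulo boundaries, and spanning). *)
Definition interval_decomposition (V : finType) (K : {set {set V}})
  (d : Order.disp_t) (P : finPOrderType d) (M : P -> {set {set V}})
  (ord : 'I_#|P| -> P) (n : nat) (bars : seq (nat * nat))
  (z : nat -> nat -> chain V) : Prop :=
  let L := Kfilt M ord in
  (forall k, (k < size bars)%N ->
     ((nth (0, 0) bars k).1 <= (nth (0, 0) bars k).2 < #|P|)%N) /\
  (forall k i, (k < size bars)%N -> alive bars k i -> is_cycle n (L i) (z k i)) /\
  (forall k i, (k < size bars)%N -> alive bars k i -> alive bars k i.+1 ->
     is_boundary n (L i.+1) (z k i - z k i.+1)) /\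
  (forall k i, (k < size bars)%N -> alive bars k i -> ~~ alive bars k i.+1 ->
     (i.+1 < #|P|)%N -> is_boundary n (L i.+1) (z k i)) /\
  (forall i, (i < #|P|)%N -> forall S : {set 'I_(size bars)},
     (forall k, k \in S -> alive bars k i) ->
     is_boundary n (L i) (\sum_(k in S) z k i) -> S = set0) /\
  (forall i, (i < #|P|)%N -> forall c, is_cycle n (L i) c ->
     exists S : {set 'I_(size bars)},
       (forall k, k \in S -> alive bars k i) /\
       is_boundary n (L i) (c - \sum_(k in S) z k i)).

(* value f(p_{i+1}) for 0-based i; None stands for +infinity (i = m) *)
Definition fval (R : realType) (d : Order.disp_t) (P : finPOrderType d)
  (fP : P -> R) (ord : 'I_#|P| -> P) (i : nat) : option R :=
  match insub i : option 'I_#|P| with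
  | Some j => Some (fP (ord j))
  | None => None
  end.

(* persistence diagram (as a multiset = seq up to permutation) of a barcode:
   bar [a,b] gives the point (f(p_a), f(p_{b+1})) (paper's 1-based indices),
   points on the diagonal are discarded. *)
Definition pers (R : realType) (d : Order.disp_t) (P : finPOrderType d)
  (fP : P -> R) (ord : 'I_#|P| -> P) (bars : seq (nat * nat))
  : seq (option R * option R) :=
  [seq x <- [seq (fval fP ord ab.1, fval fP ord ab.2.+1) | ab <- bars]
     | x.1 != x.2].

From mathcomp Require Import all_boot all_order all_algebra.
From mathcomp Require Import reals.
From Stdlib Require Import ClassicalEpsilon.
From mathcomp Require Import zify.
Set Implicit Arguments. Unset Strict Implicit. Unset Printing Implicit Defensive.
Import Order.TTheory GRing.Theory Num.Theory.

(* Both f-compatible orders list the same values f(p_1) <= ... <= f(p_m), and the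
   indices carrying a given value form the same interval for both.  Hence the
   multiplicity of a point (x, y) of either diagram is an alternating sum of four
   numbers of bars alive across two indices t <= t' taken among the endpoints of
   these intervals.  At such an index the complex K_t is the union of the Morse
   sets on which f lies below a threshold, so it does not depend on the order;
   and the number of bars alive across t and t' depends only on K_t and K_t':
   it is the largest size of a family of n-cycles of K_t that stays independent
   modulo the boundaries of K_t' (the rank of H_n(K_t) -> H_n(K_t')). *)

Section Chains.
Variable V : finType.
Local Open Scope ring_scope.
Implicit Types (c : chain V) (L : {set {set V}}).

Lemma oppr_chain c : - c = c.
Proof. by apply/ffunP => s; rewrite ffunE oppr_pchar2 // pchar_Fp. Qed.

Lemma bdD c1 c2 : bd (c1 + c2) = bd c1 + bd c2.
Proof.
apply/ffunP => t; rewrite !ffunE; case: ifP => _; first by rewrite addr0.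
by rewrite -big_split /=; apply: eq_bigr => s _; rewrite ffunE.
Qed.

Lemma bd0 : bd (0 : chain V) = 0.
Proof. by apply: (addrI (bd 0)); rewrite -bdD !addr0. Qed.

Lemma is_nchain0 k L : is_nchain k L 0.
Proof. by move=> s; rewrite ffunE eqxx. Qed.

Lemma is_nchainD k L c1 c2 :
  is_nchain k L c1 -> is_nchain k L c2 -> is_nchain k L (c1 + c2).
Proof.
move=> h1 h2 s; rewrite ffunE.
by case: (eqVneq (c1 s) 0) => [->|/h1 //]; rewrite add0r; apply: h2.
Qed.

Lemma is_nchainS k L1 L2 c :
  L1 \subset L2 -> is_nchain k L1 c -> is_nchain k L2 c.
Proof. by move=> /subsetP sL h s /h [/sL]. Qed.

Lemma is_boundary0 k L : is_boundary k L 0.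
Proof. by exists 0; split; [apply: is_nchain0 | apply: bd0]. Qed.

Lemma is_boundaryD k L c1 c2 :
  is_boundary k L c1 -> is_boundary k L c2 -> is_boundary k L (c1 + c2).
Proof.
move=> [e1 [h1 <-]] [e2 [h2 <-]]; exists (e1 + e2).
by split; [apply: is_nchainD | apply: bdD].
Qed.

Lemma is_boundaryB k L c1 c2 :
  is_boundary k L c1 -> is_boundary k L c2 -> is_boundary k L (c1 - c2).
Proof. by rewrite oppr_chain; apply: is_boundaryD. Qed.

Lemma is_boundaryS k L1 L2 c :
  L1 \subset L2 -> is_boundary k L1 c -> is_boundary k L2 c.
Proof. by move=> sL [e [h <-]]; exists e; split => //; apply: is_nchainS h. Qed.

Lemma is_boundary_sum k L (I : finType) (S : {set I}) (F : I -> chain V) :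
  (forall i, i \in S -> is_boundary k L (F i)) ->
  is_boundary k L (\sum_(i in S) F i).
Proof.
by move=> h; apply: big_ind => //; [apply: is_boundary0 | apply: is_boundaryD].
Qed.

Lemma is_cycle_sum k L (I : finType) (S : {set I}) (F : I -> chain V) :
  (forall i, i \in S -> is_cycle k L (F i)) -> is_cycle k L (\sum_(i in S) F i).
Proof.
move=> h; apply: big_ind => //; first by split; [apply: is_nchain0 | apply: bd0].
by move=> c1 c2 [h1 e1] [h2 e2]; split; [apply: is_nchainD | rewrite bdD e1 e2 addr0].
Qed.

Lemma sumr_symdiff (I : finType) (S1 S2 : {set I}) (F : I -> chain V) :
  \sum_(i in S1) F i - \sum_(i in S2) F i =
  \sum_(i in (S1 :\: S2) :|: (S2 :\: S1)) F i.
Proof.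
rewrite [in LHS](big_setID S2) [X in _ - X](big_setID S1) /= setIC oppr_chain.
rewrite addrACA -[X in X + _ + _]oppr_chain addNr add0r -bigU /=.
  by apply: eq_bigl => i; rewrite !inE.
by apply/setDidPl/setP => i; rewrite !inE; case: (i \in S1); case: (i \in S2).
Qed.

Definition independent_mod n L (I : finType) (c : I -> chain V) (A : {set I}) :=
  forall S : {set I}, S \subset A -> is_boundary n L (\sum_(i in S) c i) -> S = set0.

End Chains.

Lemma card_ord_ltn m j : j <= m -> #|[set i : 'I_m | i < j]| = j.
Proof.
move=> le_jm; have -> : [set i : 'I_m | i < j] = widen_ord le_jm @: setT.
  apply/setP => i; rewrite inE; apply/idP/imsetP => [lt_ij|[k _ ->]] //=.
  by exists (Ordinal lt_ij) => //; apply: val_inj.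
by rewrite card_imset ?cardsT ?card_ord // => x y /(congr1 val) /= /val_inj.
Qed.

Lemma mem_ord_initial m (S : {set 'I_m}) :
  (forall i j : 'I_m, i <= j -> j \in S -> i \in S) ->
  forall j : 'I_m, (j \in S) = (j < #|S|).
Proof.
move=> downS j; apply/idP/idP => [Sj|].
  have : [set i : 'I_m | i < j.+1] \subset S.
    by apply/subsetP => i; rewrite inE ltnS => le_ij; apply: downS Sj.
  by move/subset_leq_card; rewrite card_ord_ltn.
apply: contraLR => S'j; rewrite -leqNgt.
have : S \subset [set i : 'I_m | i < j].
  apply/subsetP => i Si; rewrite inE ltnNge; apply: contra S'j => le_ji.
  exact: downS Si.
by move/subset_leq_card; rewrite card_ord_ltn // ltnW.
Qed.

Lemma count_card_nth (T : Type) (x0 : T) (p : pred T) (s : seq T) :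
  count p s = #|[set k : 'I_(size s) | p (nth x0 s k)]|.
Proof.
rewrite cardsE -sum1_card (eq_bigl (fun k : 'I_(size s) => p (nth x0 s k))) //.
rewrite -(big_mkord (fun k => p (nth x0 s k)) (fun _ => 1)) /index_iota subn0.
by rewrite sum1_count -{1}(mkseq_nth x0 s) /mkseq count_map.
Qed.

Lemma Kfilt_subset (V : finType) d (P : finPOrderType d) (M : P -> {set {set V}})
  ord i j : i <= j -> Kfilt M ord i \subset Kfilt M ord j.
Proof.
move=> le_ij; apply/subsetP => s /bigcupP [k le_ki Ms].
by apply/bigcupP; exists k => //; apply: leq_trans le_ij.
Qed.

Definition alive_across (bars : seq (nat * nat)) (al be : nat) :
  {set 'I_(size bars)} :=
  [set k : 'I_(size bars) |
    ((nth (0, 0) bars k).1 <= al) && (be <= (nth (0, 0) bars k).2)].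

Section IntervalDecomposition.
Variables (V : finType) (K : {set {set V}}) (d : Order.disp_t) (P : finPOrderType d).
Variables (M : P -> {set {set V}}) (ord : 'I_#|P| -> P) (n : nat).
Variables (bars : seq (nat * nat)) (z : nat -> nat -> chain V).
Hypothesis decomp : interval_decomposition K M ord n bars z.
Local Notation L := (Kfilt M ord).
Local Notation m := #|P|.
Local Notation birth k := (nth (0, 0) bars k).1.
Local Notation death k := (nth (0, 0) bars k).2.
Local Open Scope ring_scope.

Lemma bar_bounds : {in bars, forall ab : nat * nat, (ab.1 <= ab.2 < m)%N}.
Proof. by move=> ab /(nthP (0, 0)) [k lt_k <-]; apply: decomp.1. Qed.

Lemma rep_transport k al be : (k < size bars)%N ->
  (birth k <= al <= be)%N -> (be <= death k)%N ->
  is_boundary n (L be) (z k al - z k be).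
Proof.
have [_ [_ [rep_step _]]] := decomp.
move=> lt_k /andP [le_b_al]; elim: be => [|be IH] le_al_be le_be_d.
  by rewrite leqn0 in le_al_be; rewrite (eqP le_al_be) subrr; apply: is_boundary0.
case: (ltngtP al be.+1) le_al_be => // [lt_al_be _|<- _]; last first.
  by rewrite subrr; apply: is_boundary0.
rewrite -[z k al](subrK (z k be)) -addrA; apply: is_boundaryD.
  by apply: is_boundaryS (Kfilt_subset _ _ (leqnSn be)) (IH _ _); lia.
by apply: rep_step; rewrite // /alive; lia.
Qed.

Lemma rep_dies k al be : (k < size bars)%N ->
  (birth k <= al <= death k)%N -> (death k < be < m)%N ->
  is_boundary n (L be) (z k al).
Proof.
have [_ [_ [_ [rep_death _]]]] := decomp.
move=> lt_k /andP [le_b_al le_al_d] /andP [lt_d_be lt_be_m].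
rewrite -[z k al](subrK (z k (death k))); apply: is_boundaryD.
  apply: is_boundaryS (Kfilt_subset _ _ (ltnW lt_d_be)) _.
  by apply: rep_transport; rewrite ?le_b_al.
apply: is_boundaryS (Kfilt_subset _ _ lt_d_be) _.
by apply: rep_death; rewrite // /alive ?leqnn ?ltnn ?andbF //; lia.
Qed.

Lemma alive_rep_cycle al be (k : 'I_(size bars)) : (al <= be)%N ->
  k \in alive_across bars al be -> is_cycle n (L al) (z k al).
Proof.
have [_ [rep_cycle _]] := decomp.
move=> le_al_be; rewrite inE => /andP [? ?].
by apply: rep_cycle; rewrite ?ltn_ord // /alive; lia.
Qed.

Lemma alive_reps_independent al be : (al <= be < m)%N ->
  independent_mod n (L be) (fun k : 'I_(size bars) => z k al)
    (alive_across bars al be).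
Proof.
have [_ [_ [_ [_ [rep_indep _]]]]] := decomp.
move=> /andP [le_al_be lt_be_m] S /subsetP sub_S bd_S.
apply: (rep_indep _ lt_be_m) => [k /sub_S|].
  by rewrite inE /alive => /andP [? ?]; apply/andP; split => //; lia.
have -> : \sum_(k in S) z k be =
    \sum_(k in S) z k al - \sum_(k in S) (z k al - z k be).
  by rewrite sumrB opprB addrC subrK.
apply: is_boundaryB => //; apply: is_boundary_sum => k /sub_S.
by rewrite inE => /andP [? ?]; apply: rep_transport; rewrite ?ltn_ord //; lia.
Qed.

Lemma cycle_homologous_alive al be c : (al <= be < m)%N -> is_cycle n (L al) c ->
  exists2 U : {set 'I_(size bars)}, U \subset alive_across bars al be &
    is_boundary n (L be) (c - \sum_(k in U) z k be).
Proof.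
have [_ [_ [_ [_ [_ rep_span]]]]] := decomp.
move=> /andP [le_al_be lt_be_m] cyc_c.
have [S [alive_S bd_cS]] := rep_span _ (leq_ltn_trans le_al_be lt_be_m) _ cyc_c.
set T := alive_across bars al be.
exists (S :&: T); first exact: subsetIr.
have -> : c - \sum_(k in S :&: T) z k be = (c - \sum_(k in S) z k al)
    + \sum_(k in S :\: T) z k al + \sum_(k in S :&: T) (z k al - z k be).
  by rewrite [\sum_(k in S) _](big_setID T) /= sumrB opprD !addrA !subrK.
apply: is_boundaryD; first apply: is_boundaryD.
- exact: is_boundaryS (Kfilt_subset _ _ le_al_be) bd_cS.
- apply: is_boundary_sum => k; rewrite !inE negb_and => /andP [dead_k S_k].
  have := alive_S _ S_k; rewrite /alive => /andP [? ?].
  by apply: rep_dies; rewrite ?ltn_ord //; lia.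
- apply: is_boundary_sum => k; rewrite !inE => /andP [_ /andP [? ?]].
  by apply: rep_transport; rewrite ?ltn_ord //; lia.
Qed.

(* Sending S \subset A to a set of alive representatives homologous to the sum
   of c over S is injective on the powerset of A, which bounds 2 ^ #|A|. *)
Lemma card_independent_le al be (I : finType) (A : {set I}) (c : I -> chain V) :
  (al <= be < m)%N -> (forall i, i \in A -> is_cycle n (L al) (c i)) ->
  independent_mod n (L be) c A -> (#|A| <= #|alive_across bars al be|)%N.
Proof.
move=> le_al_be_m cyc_c indep_c; set T := alive_across bars al be.
have homologous S : exists U : {set 'I_(size bars)}, U \subset T /\
    is_boundary n (L be) (\sum_(i in S :&: A) c i - \sum_(k in U) z k be).
  have cyc_S : is_cycle n (L al) (\sum_(i in S :&: A) c i).
    by apply: is_cycle_sum => i; rewrite inE => /andP [_ /cyc_c].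
  by have [U] := cycle_homologous_alive le_al_be_m cyc_S; exists U.
pose g S := proj1_sig (constructive_indefinite_description _ (homologous S)).
have gP S := proj2_sig (constructive_indefinite_description _ (homologous S)).
have g_inj : {in powerset A &, injective g}.
  move=> S1 S2; rewrite !inE => sub_S1 sub_S2 eq_g.
  have := is_boundaryB (gP S1).2 (gP S2).2.
  rewrite -/(g S1) -/(g S2) eq_g opprB addrA subrK.
  rewrite (setIidPl sub_S1) (setIidPl sub_S2) sumr_symdiff.
  have sub_symdiff : (S1 :\: S2) :|: (S2 :\: S1) \subset A.
    by rewrite subUset !(subset_trans (subsetDl _ _)).
  move=> /(indep_c _ sub_symdiff)/setP symdiff0; apply/setP => i.
  by have := symdiff0 i; rewrite !inE; case: (i \in S1); case: (i \in S2).
have : (#|powerset A| <= #|powerset T|)%N.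
  rewrite -(card_in_imset g_inj); apply/subset_leq_card/subsetP => U.
  by case/imsetP => S _ ->; rewrite inE; apply: (gP S).1.
by rewrite !card_powerset leq_exp2l.
Qed.

End IntervalDecomposition.

(* Indices A and B count filtration steps: for 0 < A <= B, [bars_across s A B]
   counts the bars alive at both (0-based) indices A.-1 and B.-1. *)
Definition bars_across (s : seq (nat * nat)) (A B : nat) : nat :=
  count (fun ab : nat * nat => (ab.1 < A) && (B <= ab.2.+1)) s.

Definition bars_in_box (s : seq (nat * nat)) (A1 A2 B1 B2 : nat) : nat :=
  count (fun ab : nat * nat => (A1 <= ab.1 < A2) && (B1 <= ab.2.+1 < B2)) s.

Lemma bars_in_box_across s A1 A2 B1 B2 : A1 <= A2 -> B1 <= B2 ->
  bars_in_box s A1 A2 B1 B2 + bars_across s A1 B1 + bars_across s A2 B2 =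
  bars_across s A2 B1 + bars_across s A1 B2.
Proof.
rewrite /bars_in_box /bars_across => le_A le_B.
elim: s => //= -[a b] s; rewrite /=.
by case: (ltnP a A1); case: (ltnP a A2); case: (leqP B1 b.+1); case: (leqP B2 b.+1);
  rewrite /=; lia.
Qed.

Lemma bars_across0l s B : bars_across s 0 B = 0.
Proof. by rewrite -[RHS](count_pred0 s); apply: eq_count => ab; rewrite ltn0. Qed.

Lemma bars_across0r m s A B : {in s, forall ab : nat * nat, ab.1 <= ab.2 < m} ->
  m < B -> bars_across s A B = 0.
Proof.
move=> bounds_s lt_mB; rewrite -[RHS](count_pred0 s); apply: eq_in_count.
by move=> ab /bounds_s /andP [_ ?] /=; apply/negP => /andP [_ ?]; lia.
Qed.

Lemma bars_in_box0 m s A1 A2 B1 B2 :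
  {in s, forall ab : nat * nat, ab.1 <= ab.2 < m} ->
  B2 <= A1 -> bars_in_box s A1 A2 B1 B2 = 0.
Proof.
move=> bounds_s le_B2_A1; rewrite -[RHS](count_pred0 s); apply: eq_in_count.
move=> ab /bounds_s /andP [le_ab _] /=.
by apply/negP => /andP [/andP [? _] /andP [_ ?]]; lia.
Qed.

Section TwoFiltrations.
Variables (V : finType) (K : {set {set V}}) (d : Order.disp_t) (P : finPOrderType d).
Variables (M : P -> {set {set V}}) (n : nat).

Lemma card_alive_across_le ord ord' bars bars' (z z' : nat -> nat -> chain V) al be :
  interval_decomposition K M ord n bars z ->
  interval_decomposition K M ord' n bars' z' -> (al <= be < #|P|)%N ->
  Kfilt M ord al = Kfilt M ord' al -> Kfilt M ord be = Kfilt M ord' be ->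
  (#|alive_across bars al be| <= #|alive_across bars' al be|)%N.
Proof.
move=> D D' le_al_be_m eq_al eq_be; have /andP [le_al_be _] := le_al_be_m.
apply: (card_independent_le D' (c := fun k : 'I_(size bars) => z k al) le_al_be_m).
  by move=> k /(alive_rep_cycle D le_al_be); rewrite eq_al.
by rewrite -eq_be; apply: (alive_reps_independent D).
Qed.

Definition Kfilt_agree (ord ord' : 'I_#|P| -> P) (t : nat) : Prop :=
  (0 < t <= #|P|)%N -> Kfilt M ord t.-1 = Kfilt M ord' t.-1.

Lemma bars_across_eq ord ord' bars bars' (z z' : nat -> nat -> chain V) A B :
  interval_decomposition K M ord n bars z ->
  interval_decomposition K M ord' n bars' z' -> (A <= B)%N ->
  Kfilt_agree ord ord' A -> Kfilt_agree ord ord' B ->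
  bars_across bars A B = bars_across bars' A B.
Proof.
move=> D D' le_AB agree_A agree_B.
case: A le_AB agree_A => [|al] le_AB agree_A; first by rewrite !bars_across0l.
have [lt_mB|le_Bm] := ltnP #|P| B.
  by rewrite (bars_across0r _ (bar_bounds D) lt_mB)
             (bars_across0r _ (bar_bounds D') lt_mB).
case: B le_AB agree_B le_Bm => // be le_AB agree_B le_Bm.
have across_alive (s : seq (nat * nat)) :
    bars_across s al.+1 be.+1 = #|alive_across s al be|.
  by rewrite /bars_across (count_card_nth (0, 0)); apply: eq_card => k; rewrite !inE.
have {}agree_A := agree_A (leq_trans le_AB le_Bm).
have {}agree_B := agree_B le_Bm.
have le_al_be_m : (al <= be < #|P|)%N by rewrite -ltnS le_AB.
rewrite !across_alive; apply/anti_leq/andP; split.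
  exact: (card_alive_across_le D D' le_al_be_m agree_A agree_B).
exact: (card_alive_across_le D' D le_al_be_m (esym agree_A) (esym agree_B)).
Qed.

Lemma bars_in_box_eq ord ord' bars bars' (z z' : nat -> nat -> chain V)
  A1 A2 B1 B2 :
  interval_decomposition K M ord n bars z ->
  interval_decomposition K M ord' n bars' z' ->
  (A1 <= A2 <= B1)%N -> (B1 <= B2)%N ->
  [/\ Kfilt_agree ord ord' A1, Kfilt_agree ord ord' A2,
      Kfilt_agree ord ord' B1 & Kfilt_agree ord ord' B2] ->
  bars_in_box bars A1 A2 B1 B2 = bars_in_box bars' A1 A2 B1 B2.
Proof.
move=> D D' /andP [le_A12 le_A2B1] le_B12 [agree_A1 agree_A2 agree_B1 agree_B2].
have le_A1B1 := leq_trans le_A12 le_A2B1.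
have := bars_in_box_across bars le_A12 le_B12.
have := bars_in_box_across bars' le_A12 le_B12.
rewrite (bars_across_eq D D' le_A1B1 agree_A1 agree_B1).
rewrite (bars_across_eq D D' le_A2B1 agree_A2 agree_B1).
rewrite (bars_across_eq D D' (leq_trans le_A1B1 le_B12) agree_A1 agree_B2).
rewrite (bars_across_eq D D' (leq_trans le_A2B1 le_B12) agree_A2 agree_B2).
lia.
Qed.

End TwoFiltrations.

Section Levels.
Variables (R : realType) (d : Order.disp_t) (P : finPOrderType d) (fP : P -> R).
Local Notation m := #|P|.
Local Open Scope ring_scope.

Definition downward_closed (pr : pred R) := forall x y : R, y <= x -> pr x -> pr y.

Definition level_count (pr : pred R) := #|[set p : P | pr (fP p)]|.

(* The indices i <= m with [fval fP ord i = o] are those in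
   [level_start o, level_end o); [None] stands for +oo and sits at i = m. *)
Definition level_start (o : option R) : nat :=
  if o is Some x then level_count (fun y => y < x) else m.

Definition level_end (o : option R) : nat :=
  if o is Some x then level_count (fun y => y <= x) else m.+1.

Lemma level_count_le_card pr : (level_count pr <= m)%N.
Proof. exact: max_card. Qed.

Lemma level_count_subset (pr1 pr2 : pred R) :
  (forall y, pr1 y -> pr2 y) -> (level_count pr1 <= level_count pr2)%N.
Proof.
by move=> sub12; apply/subset_leq_card/subsetP => p; rewrite !inE; apply: sub12.
Qed.

Lemma level_start_le_end o : (level_start o <= level_end o)%N.
Proof. by case: o => [x|] //=; apply: level_count_subset => y /ltW. Qed.

Lemma level_separated o1 o2 : o1 != o2 ->
  (level_end o1 <= level_start o2)%N || (level_end o2 <= level_start o1)%N.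
Proof.
case: o1 o2 => [x|] [y|] //= neq_xy; rewrite ?level_count_le_card ?orbT //.
case: (ltgtP x y) neq_xy => [lt_xy _|lt_yx _|->]; last by rewrite eqxx.
- by apply/orP; left; apply: level_count_subset => u /le_lt_trans; apply.
- by apply/orP; right; apply: level_count_subset => u /le_lt_trans; apply.
Qed.

Lemma downward_closed_le x : downward_closed (fun y => y <= x).
Proof. by move=> y u le_uy /(le_trans le_uy). Qed.

Lemma downward_closed_lt x : downward_closed (fun y => y < x).
Proof. by move=> y u le_uy /(le_lt_trans le_uy). Qed.

Variable ord : 'I_#|P| -> P.
Hypothesis ord_compat : f_compatible fP ord.

Lemma ltn_level_count pr : downward_closed pr ->
  forall j : 'I_m, (j < level_count pr)%N = pr (fP (ord j)).
Proof.
move=> down_pr j; have [[g ordK ordV] [_ mono]] := ord_compat.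
set S := [set i : 'I_m | pr (fP (ord i))].
have -> : level_count pr = #|S|.
  rewrite -(card_imset _ (can_inj ordK)); apply: eq_card => p.
  rewrite !inE; apply/idP/imsetP => [pr_p|[i]]; last by rewrite inE => ? ->.
  by exists (g p); rewrite ?inE ordV.
rewrite -(mem_ord_initial (S := S)) ?inE // => i k le_ik.
by rewrite !inE; apply: down_pr; apply: mono.
Qed.

Lemma Kfilt_level_count (V : finType) (M : P -> {set {set V}}) pr :
  downward_closed pr -> (0 < level_count pr)%N ->
  Kfilt M ord (level_count pr).-1 = \bigcup_(p | pr (fP p)) M p.
Proof.
move=> down_pr pos_pr; have [[g ordK ordV] _] := ord_compat.
apply/setP => s; apply/bigcupP/bigcupP => [[j le_j Ms]|[p pr_p Ms]].
  by exists (ord j) => //; rewrite -ltn_level_count //; lia.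
exists (g p); last by rewrite ordV.
by have := ltn_level_count down_pr (g p); rewrite ordV pr_p; lia.
Qed.

Lemma fval_lt i (lt_im : (i < m)%N) : fval fP ord i = Some (fP (ord (Ordinal lt_im))).
Proof. by rewrite /fval insubT /=; do 3 f_equal; apply: val_inj. Qed.

Lemma fval_ge i : (m <= i)%N -> fval fP ord i = None.
Proof. by move=> le_mi; rewrite /fval insubF // ltnNge le_mi. Qed.

Lemma fval_eq_level i o : (i <= m)%N ->
  (fval fP ord i == o) = (level_start o <= i < level_end o)%N.
Proof.
rewrite leq_eqVlt => /orP [/eqP ->|lt_im].
  rewrite fval_ge //; case: o => [x|] /=; last by rewrite leqnn ltnSn.
  by rewrite ltnNge !level_count_le_card.
rewrite fval_lt; case: o => [x|] /=; last by rewrite leqNgt lt_im.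
rewrite leqNgt; have := ltn_level_count (@downward_closed_le x) (Ordinal lt_im).
have := ltn_level_count (@downward_closed_lt x) (Ordinal lt_im).
by rewrite /= => -> ->; rewrite (inj_eq Some_inj); case: ltgtP.
Qed.

Lemma count_fval_level s o1 o2 :
  {in s, forall ab : nat * nat, (ab.1 <= ab.2 < m)%N} ->
  count (fun ab : nat * nat => (fval fP ord ab.1 == o1) &&
                               (fval fP ord ab.2.+1 == o2)) s =
  bars_in_box s (level_start o1) (level_end o1) (level_start o2) (level_end o2).
Proof.
move=> bounds_s; apply: eq_in_count => ab /bounds_s /andP [le_ab lt_bm] /=.
by rewrite !fval_eq_level // ltnW // (leq_ltn_trans le_ab).
Qed.

End Levels.

Lemma count_mem_pers (R : realType) d (P : finPOrderType d) (fP : P -> R) ord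
    bars (pt : option R * option R) :
  count_mem pt (pers fP ord bars) = ((pt.1 != pt.2) *
    count (fun ab : nat * nat => (fval fP ord ab.1 == pt.1) &&
                                 (fval fP ord ab.2.+1 == pt.2)) bars)%N.
Proof.
rewrite /pers count_filter count_map; case: pt => [o1 o2] /=.
have [<-|neq_o] /= := eqVneq o1 o2.
  rewrite mul0n -[RHS](count_pred0 bars); apply: eq_count => ab /=.
  by case: eqP => //= -[-> ->]; rewrite eqxx.
rewrite mul1n; apply: eq_count => ab /=.
by rewrite xpair_eqE; case: eqP => //= ->; case: eqP => //= ->.
Qed.

Section CompatibleOrders.
Variables (R : realType) (d : Order.disp_t) (P : finPOrderType d) (fP : P -> R).
Variables (ord ord' : 'I_#|P| -> P).
Hypotheses (compat : f_compatible fP ord) (compat' : f_compatible fP ord').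

Lemma fval_f_compatible : fval fP ord =1 fval fP ord'.
Proof.
move=> i; have [le_im|lt_mi] := leqP i #|P|.
  by apply/eqP; rewrite (fval_eq_level compat) // -(fval_eq_level compat').
by rewrite !fval_ge // ltnW.
Qed.

Lemma pers_f_compatible bars : pers fP ord bars = pers fP ord' bars.
Proof.
by rewrite /pers; congr filter; apply: eq_map => ab; rewrite !fval_f_compatible.
Qed.

Lemma Kfilt_agree_level_count (V : finType) (M : P -> {set {set V}}) pr :
  downward_closed pr -> Kfilt_agree M ord ord' (level_count fP pr).
Proof. by move=> down_pr /andP [pos_pr _]; rewrite !Kfilt_level_count. Qed.

Lemma Kfilt_agree_level (V : finType) (M : P -> {set {set V}}) o :
  Kfilt_agree M ord ord' (level_start fP o) /\ Kfilt_agree M ord ord' (level_end fP o).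
Proof.
case: o => [x|] /=.
  by split; apply: Kfilt_agree_level_count;
    [apply: downward_closed_lt | apply: downward_closed_le].
split; last by rewrite /Kfilt_agree ltnn andbF.
have -> : #|P| = level_count fP predT by rewrite /level_count cardsT.
exact: Kfilt_agree_level_count.
Qed.

End CompatibleOrders.

Theorem proposition13 (R : realType) (V : finType) (K : {set {set V}})
  (MV : {set {set {set V}}}) (d : Order.disp_t) (P : finPOrderType d)
  (M : P -> {set {set V}}) (f : {set V} -> R) (fP : P -> R)
  (ord ord' : 'I_#|P| -> P) :
  simplicial_complex K ->
  multivector_field K MV ->
  morse_decomposition K MV M ->
  lyapunov M f fP ->
  f_compatible fP ord ->
  f_compatible fP ord' ->
  forall (n : nat) (bars bars' : seq (nat * nat)) (z z' : nat -> nat -> chain V),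
    interval_decomposition K M ord n bars z ->
    interval_decomposition K M ord' n bars' z' ->
    perm_eq (pers fP ord bars) (pers fP ord' bars').
Proof.
move=> _ _ _ _ compat compat' n bars bars' z z' D D'.
rewrite -(pers_f_compatible compat compat').
apply/allP => -[o1 o2] _; apply/eqP; rewrite !count_mem_pers /=.
have [_|neq_o] := eqVneq o1 o2; first by rewrite !mul0n.
rewrite (count_fval_level compat _ _ (bar_bounds D)).
rewrite (count_fval_level compat _ _ (bar_bounds D')).
congr (_ * _)%N.
have [agree_s1 agree_e1] := Kfilt_agree_level compat compat' M o1.
have [agree_s2 agree_e2] := Kfilt_agree_level compat compat' M o2.
case/orP: (level_separated fP neq_o) => sep.
  by apply: (bars_in_box_eq D D'); rewrite ?level_start_le_end ?sep.
by rewrite (bars_in_box0 _ _ (bar_bounds D) sep) (bars_in_box0 _ _ (bar_bounds D') sep).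
Qed.
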